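(* Let $\mathbf{A}\in\mathbb{R}^{(\ell m)\times(qn)}$ be a block matrix with $\ell\times q$ blocks of size $m\times n$, with distinct nonzero blocks $\mathbf{A}_1,\dots,\mathbf{A}_p$, multiplicities $\eta_k$ and location-tally matrices $\mathbf{E}_1,\dots,\mathbf{E}_p\in\mathbb{R}^{\ell\times q}$. Let $\mathbf{B}=\mathbf{S}_{\ell,m}\mathbf{A}\mathbf{S}_{q,n}^\top$ and let $\mathscr{B}\subseteq\mathbb{R}^{\ell\times q}$ be the span of the blocks of $\mathbf{B}$. Define $\mathtt{mat}_{\mathscr{E}}:\mathbb{R}^p\to\mathbb{R}^{\ell\times q}$ by $\mathtt{mat}_{\mathscr{E}}(\mathbf{v})=\sum_{k=1}^p v_k\mathbf{E}_k$, and define $\mathtt{vec}_{\mathscr{E}}$ on $\mathrm{span}\{\mathbf{E}_1,\dots,\mathbf{E}_p\}$ by $\mathtt{vec}_{\mathscr{E}}\bigl(\sum_k c_k\mathbf{E}_k\bigr)=(c_1,\dots,c_p)^\top$. Let $\mathbf{A}_{(2)}\in\mathbb{R}^{p\times mn}$ be the matrix whose $k$th row is $\mathrm{vec}(\sqrt{\eta_k}\mathbf{A}_k)^\top$. Then $\mathscr{B}\subseteq\mathrm{span}\{\mathbf{E}_k\}$, and $\mathtt{vec}_{\mathscr{E}}$ restricted to $\mathscr{B}$ is a linear bijection from $\mathscr{B}$ onto the column space of $\mathbf{A}_{(2)}$, with inverse the restriction of $\mathtt{mat}_{\mathscr{E}}$. In particular $\mathscr{B}$ is isomorphic to $\ma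thrm{colspace}(\mathbf{A}_{(2)})$.
   Context: Blocks of $\mathbf{A}$: $\mathbf{A}^{(\gamma,\delta)}_{\alpha\beta}=\mathbf{A}_{(\gamma-1)m+\alpha,(\delta-1)n+\beta}$, $(\gamma,\delta)\in[\ell]\times[q]$. $\eta_k$ is the number of block positions with $\mathbf{A}^{(\gamma,\delta)}=\mathbf{A}_k$, and $[\mathbf{E}_k]_{\gamma\delta}=1/\sqrt{\eta_k}$ if $\mathbf{A}^{(\gamma,\delta)}=\mathbf{A}_k$, else $0$ (the $\mathbf{E}_k$ have disjoint supports, hence are linearly independent). For $a,b\ge1$, $s=ab$, $\mathbf{S}_{a,b}\in\mathbb{R}^{s\times s}$ is the permutation matrix whose row $(i-1)a+j$ is $\mathbf{e}_{(j-1)b+i}^\top$ ($i\in[b]$, $j\in[a]$). $\mathbf{B}\in\mathbb{R}^{(m\ell)\times(nq)}$ is viewed as an $m\times n$ grid of $\ell\times q$ blocks $\mathbf{B}^{(\alpha,\beta)}$ with $\mathbf{B}^{(\alpha,\beta)}_{\gamma\delta}=\mathbf{B}_{(\alpha-1)\ell+\gamma,(\beta-1)q+\delta}$. $\mathbf{A}_{(2)}$ is the mode-2 unfolding of the tensor $\mathcal{A}\in\mathbb{R}^{m\times p\times n}$ with $\mathcal{A}_{ikj}=\sqrt{\eta_k}[\mathbf{A}_k]_{ij}$. *)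

From HB Require Import structures.
From mathcomp Require Import all_boot all_order all_algebra.
Set Implicit Arguments. Unset Strict Implicit. Unset Printing Implicit Defensive.
Import Order.TTheory GRing.Theory Num.Theory.
Local Open Scope ring_scope.

(* All indices are 0-based: i : 'I_n stands for the paper's i+1. *)

Section Defs.
Variable R : rcfType.

(* S_{a,b} : row  i*a + j  (i < b, j < a) is e_{j*b + i}^T,
   i.e. entry (r, c) = 1 iff c = (r %% a) * b + r %/ a. *)
Definition Sperm (a b : nat) : 'M[R]_(a * b) :=
  \matrix_(r, c) (if (c : nat) == ((r %% a) * b + r %/ a)%N then 1 else 0).

(* Block (g, d) of A : 'M_(l*m, q*n): entry (al, be) is A_{g*m+al, d*n+be}. *)
Definition Ablock (l q m n : nat) (A : 'M[R]_(l * m, q * n))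
  (g : 'I_l) (d : 'I_q) : 'M[R]_(m, n) :=
  \matrix_(al, be) A (mxvec_index g al) (mxvec_index d be).

(* B viewed as an m x n grid of l x q blocks:
   B^{(al,be)}_{g d} = B_{al*l+g, be*q+d}. *)
Definition Bblock (l q m n : nat) (B : 'M[R]_(l * m, q * n))
  (al : 'I_m) (be : 'I_n) : 'M[R]_(l, q) :=
  \matrix_(g, d) B (cast_ord (mulnC m l) (mxvec_index al g))
                   (cast_ord (mulnC n q) (mxvec_index be d)).

Definition Bmat (l q m n : nat) (A : 'M[R]_(l * m, q * n)) : 'M[R]_(l * m, q * n) :=
  Sperm l m *m A *m (Sperm q n)^T.

Definition Bspace (l q m n : nat) (A : 'M[R]_(l * m, q * n)) : {vspace 'M[R]_(l, q)} :=
  (\sum_(al < m) \sum_(be < n) <[Bblock (Bmat A) al be]>)%VS.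

Definition eta (l q m n : nat) (A : 'M[R]_(l * m, q * n)) (Ak : 'M[R]_(m, n)) : nat :=
  #|[set gd : 'I_l * 'I_q | Ablock A gd.1 gd.2 == Ak]|.

Definition Emat (l q m n : nat) (A : 'M[R]_(l * m, q * n)) (Ak : 'M[R]_(m, n)) : 'M[R]_(l, q) :=
  \matrix_(g, d) (if Ablock A g d == Ak then (Num.sqrt (eta A Ak)%:R)^-1 else 0).

Definition Etuple (l q m n p : nat) (A : 'M[R]_(l * m, q * n))
  (Ak : 'I_p -> 'M[R]_(m, n)) : p.-tuple 'M[R]_(l, q) :=
  [tuple Emat A (Ak k) | k < p].

Definition Espace (l q m n p : nat) (A : 'M[R]_(l * m, q * n))
  (Ak : 'I_p -> 'M[R]_(m, n)) : {vspace 'M[R]_(l, q)} :=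
  <<Etuple A Ak>>%VS.

Definition matE (l q m n p : nat) (A : 'M[R]_(l * m, q * n))
  (Ak : 'I_p -> 'M[R]_(m, n)) (v : 'cV[R]_p) : 'M[R]_(l, q) :=
  \sum_(k < p) v k 0 *: Emat A (Ak k).

Definition vecE (l q m n p : nat) (A : 'M[R]_(l * m, q * n))
  (Ak : 'I_p -> 'M[R]_(m, n)) (M : 'M[R]_(l, q)) : 'cV[R]_p :=
  \col_k coord (Etuple A Ak) k M.

Definition A2 (l q m n p : nat) (A : 'M[R]_(l * m, q * n))
  (Ak : 'I_p -> 'M[R]_(m, n)) : 'M[R]_(p, m * n) :=
  \matrix_(k < p) mxvec (Num.sqrt (eta A (Ak k))%:R *: Ak k).

Definition colspace (p N : nat) (X : 'M[R]_(p, N)) : {vspace 'cV[R]_p} :=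
  (\sum_(j < N) <[col j X]>)%VS.

End Defs.

From Pilot Require Import Defs.
From HB Require Import structures.
From mathcomp Require Import all_boot all_order all_algebra.
Import Order.TTheory GRing.Theory Num.Theory.
Local Open Scope ring_scope.

(** Entry (g, d) of block (al, be) of B = S A S^T is entry (al, be) of block
    (g, d) of A.  Hence block (al, be) of B is
    sum_k [A_k]_(al be) sqrt(eta_k) E_k = mat_E (column (al, be) of A_(2)),
    so the span of the blocks of B is the image of the column space of A_(2)
    under the linear map mat_E.  The E_k have disjoint nonempty supports, so
    they are free and vec_E is a left inverse of mat_E; thus mat_E is injective
    and vec_E inverts it on that image. *)

Lemma index_allpairs (S T : eqType) (s : seq S) (t : seq T) x y :
  x \in s -> y \in t ->
  index (x, y) [seq (a, b) | a <- s, b <- t] = (index x s * size t + index y t)%N.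
Proof.
move=> + yt; elim: s => //= a s IHs.
rewrite inE index_cat; case: (eqVneq a x) => [<- _ | neq_ax /= xs].
  by rewrite (map_f (pair a)) // index_map // => ? ? [].
have /negPf-> : (x, y) \notin [seq (a, b) | b <- t].
  by apply/mapP => -[b _ [eq_xa _]]; rewrite eq_xa eqxx in neq_ax.
by rewrite size_map IHs // mulSn addnA.
Qed.

Lemma mxvec_indexE m n (i : 'I_m) (j : 'I_n) :
  mxvec_index i j = (i * n + j)%N :> nat.
Proof.
rewrite /mxvec_index /enum_rank /= enum_rank_in.unlock insubdK; last first.
  by rewrite unfold_in /= cardE index_mem mem_enum.
by rewrite enumT unlock /= index_allpairs ?mem_enum // !index_enum_ord size_enum_ord.
Qed.

Section PerfectShuffle.
Variable R : rcfType.

Lemma row_Sperm a b (i : 'I_a) (j : 'I_b) :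
  row (cast_ord (mulnC b a) (mxvec_index j i)) (Sperm R a b)
  = delta_mx 0 (mxvec_index i j).
Proof.
have a_gt0 : (0 < a)%N by apply: leq_ltn_trans (ltn_ord i).
have r_val : nat_of_ord (cast_ord (mulnC b a) (mxvec_index j i)) = (j * a + i)%N.
  exact: mxvec_indexE.
apply/rowP => c; rewrite !mxE eqxx r_val modnMDl modn_small // divnMDl //.
by rewrite divn_small // addn0 -mxvec_indexE val_eqE; case: eqP.
Qed.

Lemma Sperm_mulmx a b N (M : 'M[R]_(a * b, N)) (i : 'I_a) (j : 'I_b) s :
  (Sperm R a b *m M) (cast_ord (mulnC b a) (mxvec_index j i)) s
  = M (mxvec_index i j) s.
Proof.
set r := cast_ord (mulnC b a) (mxvec_index j i).
by have /rowP/(_ s) := row_mul r (Sperm R a b) M; rewrite row_Sperm -rowE !mxE.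
Qed.

Lemma mulmx_trSperm a b N (M : 'M[R]_(N, a * b)) r (i : 'I_a) (j : 'I_b) :
  (M *m (Sperm R a b)^T) r (cast_ord (mulnC b a) (mxvec_index j i))
  = M r (mxvec_index i j).
Proof. by rewrite -[M]trmxK -trmx_mul mxE Sperm_mulmx trmxK mxE. Qed.

Lemma Bblock_Bmat l q m n (A : 'M[R]_(l * m, q * n)) al be :
  Bblock (Bmat A) al be = \matrix_(g, d) Ablock A g d al be.
Proof.
by apply/matrixP => g d; rewrite [LHS]mxE mulmx_trSperm Sperm_mulmx !mxE.
Qed.

End PerfectShuffle.

Fact matE_is_semilinear (R : rcfType) l q m n p (A : 'M[R]_(l * m, q * n))
  (Ak : 'I_p -> 'M[R]_(m, n)) : semilinear (matE A Ak).
Proof.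
split=> [a v | v w]; rewrite /matE.
  by rewrite scaler_sumr; apply: eq_bigr => k _; rewrite mxE scalerA.
by rewrite -big_split; apply: eq_bigr => k _; rewrite mxE scalerDl.
Qed.

HB.instance Definition _ (R : rcfType) l q m n p (A : 'M[R]_(l * m, q * n))
  (Ak : 'I_p -> 'M[R]_(m, n)) :=
  GRing.isSemilinear.Build R 'cV[R]_p 'M[R]_(l, q) _ (matE A Ak)
    (@matE_is_semilinear R l q m n p A Ak).

Section TallyBasis.
Context {R : rcfType} {l q m n p : nat} {A : 'M[R]_(l * m, q * n)}.
Context {Ak : 'I_p -> 'M[R]_(m, n)}.

Lemma sqrt_eta_neq0 B :
  (exists g d, Ablock A g d = B) -> Num.sqrt (Defs.eta A B)%:R != 0 :> R.
Proof.
case=> g [d gdB]; rewrite sqrtr_eq0 -ltNge ltr0n card_gt0.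
by apply/set0Pn; exists (g, d); rewrite inE gdB.
Qed.

Lemma nth_Etuple (k : 'I_p) : (Etuple A Ak)`_k = Emat A (Ak k).
Proof. exact: nth_mktuple. Qed.

Lemma matE_in_Espace v : matE A Ak v \in Espace A Ak.
Proof.
apply: rpred_sum => k _; apply/rpredZ/memv_span.
by apply/tnthP; exists k; rewrite tnth_mktuple.
Qed.

Hypothesis Ak_inj : injective Ak.
Hypothesis Ak_block : forall k, exists g d, Ablock A g d = Ak k.

Lemma free_Etuple : free (Etuple A Ak).
Proof.
apply/freeP => c c_eq0 k; have [g [d gdk]] := Ak_block k.
move/matrixP/(_ g d): c_eq0; rewrite summxE (bigD1 k) //= big1 ?addr0 => [|i ik].
  rewrite nth_Etuple !mxE gdk eqxx => /eqP.
  by rewrite mulf_eq0 invr_eq0 (negPf (sqrt_eta_neq0 _ (Ak_block k))) orbF => /eqP.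
by rewrite nth_Etuple !mxE gdk (inj_eq Ak_inj) eq_sym (negPf ik) mulr0.
Qed.

Lemma vecE_matE v : vecE A Ak (matE A Ak v) = v.
Proof.
apply/colP => k; rewrite mxE /matE.
under eq_bigr do rewrite -nth_Etuple.
exact: coord_sum_free free_Etuple.
Qed.

Lemma A2_Emat al be k g d :
  A2 A Ak k (mxvec_index al be) * Emat A (Ak k) g d
  = if Ablock A g d == Ak k then Ablock A g d al be else 0.
Proof.
rewrite [A2 _ _ _ _]mxE mxvecE [Emat _ _ _ _]mxE.
case: eqP => [-> | _]; last by rewrite mulr0.
by rewrite mxE mulrAC divff ?mul1r // (sqrt_eta_neq0 _ (Ak_block k)).
Qed.

Hypothesis Ak_all : forall g d, Ablock A g d != 0 -> exists k, Ablock A g d = Ak k.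

Lemma matE_col_A2 al be :
  matE A Ak (col (mxvec_index al be) (A2 A Ak)) = Bblock (Bmat A) al be.
Proof.
rewrite Bblock_Bmat; apply/matrixP => g d; rewrite summxE mxE.
under eq_bigr do rewrite mxE mxE A2_Emat.
case: (pickP (fun k => Ablock A g d == Ak k)) => [k /eqP gdk | no_k].
  rewrite (bigD1 k) //= big1 ?addr0 => [|i ik]; first by rewrite gdk eqxx.
  by rewrite gdk (inj_eq Ak_inj) eq_sym (negPf ik).
rewrite big1 => [|k _]; last by rewrite no_k.
have [-> | /Ak_all [k /eqP]] := eqVneq (Ablock A g d) 0; first by rewrite mxE.
by rewrite no_k.
Qed.

Lemma Bspace_limg : Bspace A = (linfun (matE A Ak) @: colspace (A2 A Ak))%VS.
Proof.
rewrite /Bspace /colspace limg_sum (reindex _ (curry_mxvec_bij m n)) pair_bigA.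
apply: eq_bigr => -[al be] _.
by rewrite limg_line lfunE /= matE_col_A2.
Qed.

End TallyBasis.

Theorem lemma2 (R : rcfType) (l q m n p : nat) (A : 'M[R]_(l * m, q * n))
  (Ak : 'I_p -> 'M[R]_(m, n))
  (* A_1, ..., A_p are distinct *)
  (Ak_inj : injective Ak)
  (* each A_k is nonzero *)
  (Ak_nz : forall k, Ak k != 0)
  (* each A_k is a block of A *)
  (Ak_block : forall k, exists g d, Ablock A g d = Ak k)
  (* every nonzero block of A is one of the A_k *)
  (Ak_all : forall g d, Ablock A g d != 0 -> exists k, Ablock A g d = Ak k) :
  let BB := Bspace A in
  let EE := Espace A Ak in
  let CC := colspace (A2 A Ak) in
  [/\ (BB <= EE)%VS,
      (forall (a : R) (M N : 'M[R]_(l, q)), M \in BB -> N \in BB ->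
          vecE A Ak (a *: M + N) = a *: vecE A Ak M + vecE A Ak N),
      [/\ (forall M, M \in BB -> vecE A Ak M \in CC),
           (forall v, v \in CC -> matE A Ak v \in BB),
           (forall M, M \in BB -> matE A Ak (vecE A Ak M) = M)
         & (forall v, v \in CC -> vecE A Ak (matE A Ak v) = v)]
    & \dim BB = \dim CC].
Proof.
move=> BB EE CC; set mat := linfun (matE A Ak).
have vecK := vecE_matE Ak_inj Ak_block.
have BB_img : BB = (mat @: CC)%VS := Bspace_limg Ak_inj Ak_block Ak_all.
have memBB M : M \in BB -> exists2 v, v \in CC & M = matE A Ak v.
  by rewrite BB_img => /memv_imgP [v vC ->]; exists v; rewrite ?lfunE.
have mat_inj : lker mat == 0%VS.
  by apply/lker0P/(can_inj (g := vecE A Ak)) => v; rewrite lfunE vecK.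
split.
- by apply/subvP => _ /memBB [v _ ->]; apply: matE_in_Espace.
- by move=> a M N _ _; apply/colP => k; rewrite !mxE linearP.
- split=> [_ /memBB [v vC ->] | v vC | _ /memBB [v _ ->] | v _]; rewrite ?vecK //.
  by rewrite BB_img -[matE _ _ _]lfunE memv_img.
- by rewrite BB_img limg_dim_eq // (eqP mat_inj) capv0.
Qed.
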